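(* Let $\mathcal{V}$ be a variety of $\Omega$-algebras with equational base $\Sigma$. Then $\Sigma^p$ is an equational base for $\mathcal{V}^p$.
   Context: Standing conventions: $\Omega$-algebras are of a plural similarity type (no nullary operation symbols, at least one operation symbol of arity $\ge2$). $T_n$ is the set of $\Omega$-terms in $x_1,\dots,x_n$ in which all $n$ variables occur. Prolongation: for an identity $\sigma$ of the form $u(y_1,\dots,y_n)=v(y_1,\dots,y_n)$ (variables of $u,v$ among $y_1,\dots,y_n$) and $m\ge1$, $\sigma^p_m$ is the set of identities $u(r_1,\dots,r_n)=v(r_1,\dots,r_n)$ obtained by substituting $r_i(x_1,\dots,x_m)$ for $y_i$, with $r_i$ ranging over $T_m$; $\sigma^p=\bigcup_{m>0}\sigma^p_m$; $\Sigma^p=\bigcup_{\sigma\in\Sigma}\sigma^p$. $\mathcal{V}^p$ is the variety defined by $\mathrm{Id}(\mathcal{V})^p$, where $\mathrm{Id}(\mathcal{V})$ is the set of all identities holding in $\mathcal{V}$. *)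

From mathcomp Require Import all_boot.
Unset Implicit Arguments.
Unset Strict Implicit.
Unset Printing Implicit Defensive.

(* Omega-algebras over a similarity type given by operation symbols [O]
   with arities [arity : O -> nat].  Variables are indexed by nat:
   x_1, x_2, ... are [Var 0], [Var 1], ... *)

Section UA.
Variables (O : Type) (arity : O -> nat).

Inductive term : Type :=
  | Var : nat -> term
  | App (o : O) : ('I_(arity o) -> term) -> term.
Arguments App o _ : clear implicits.

Fixpoint occurs (j : nat) (t : term) : Prop :=
  match t with
  | Var k => j = k
  | App o a => exists i, occurs j (a i)
  end.

Definition T (m : nat) (t : term) : Prop := forall j, occurs j t <-> j < m.

Fixpoint subst (r : nat -> term) (t : term) : term :=
  match t with
  | Var k => r k
  | App o a => App o (fun i => subst r (a i))
  end.

Definition identity := (term * term)%type.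

Record algebra := Algebra {
  carrier :> Type;
  op : forall o : O, ('I_(arity o) -> carrier) -> carrier }.
Arguments op a o _ : clear implicits.

Fixpoint eval (A : algebra) (e : nat -> A) (t : term) {struct t} : A :=
  match t with
  | Var k => e k
  | App o a => op A o (fun i => eval A e (a i))
  end.

Definition satisfies (A : algebra) (s : identity) : Prop :=
  forall e : nat -> A, eval A e s.1 = eval A e s.2.

Definition models (A : algebra) (Sigma : identity -> Prop) : Prop :=
  forall s, Sigma s -> satisfies A s.

Definition Id_of_Mod (Sigma : identity -> Prop) : identity -> Prop :=
  fun s => forall B : algebra, models B Sigma -> satisfies B s.

Definition prolong_m (sigma : identity) (m : nat) : identity -> Prop :=
  fun s => exists n (r : nat -> term),
    (forall j, (occurs j sigma.1 \/ occurs j sigma.2) -> j < n) /\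
    (forall i, i < n -> T m (r i)) /\
    s = (subst r sigma.1, subst r sigma.2).

Definition prolong (sigma : identity) : identity -> Prop :=
  fun s => exists m, 0 < m /\ prolong_m sigma m s.

Definition prolongSet (Sigma : identity -> Prop) : identity -> Prop :=
  fun s => exists sigma, Sigma sigma /\ prolong sigma s.

Definition plural : Prop :=
  (forall o, 0 < arity o) /\ (exists o, 1 < arity o).

End UA.
Arguments App {O arity} o _.
Arguments Var {O arity} _.

From mathcomp Require Import all_boot.
From Stdlib Require Import ClassicalEpsilon FunctionalExtensionality ProofIrrelevance.

Set Implicit Arguments.
Unset Strict Implicit.

(* If A satisfies Sigma^p, then for every m > 0 and every assignment e the
   values in A of the terms of T_m under e form a subalgebra B (closed under
   the operations because no operation is nullary).  Every element of B is
   named by a term of T_m, so an instance of an identity of Sigma in B is an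
   instance of a prolongation of it in A: B lies in V.  Hence B satisfies
   every identity sigma of Id(V), and an identity of sigma^p_m evaluated under
   e in A is an instance of sigma in B. *)

Section Prolongation.
Variables (O : Type) (arity : O -> nat).
Notation term := (term O arity).
Notation algebra := (algebra O arity).
Notation occurs := (occurs O arity).
Notation subst := (subst O arity).
Notation eval := (eval O arity).
Notation T := (T O arity).

Lemma eval_subst (A : algebra) (e : nat -> A) (r : nat -> term) (t : term) :
  eval A e (subst r t) = eval A (fun j => eval A e (r j)) t.
Proof.
elim: t => [k|o a IH] //=; congr (op _ _ _ _ _).
by apply: functional_extensionality => i; apply: IH.
Qed.

Lemma eq_eval (A : algebra) (e1 e2 : nat -> A) (t : term) :
  (forall j, occurs j t -> e1 j = e2 j) -> eval A e1 t = eval A e2 t.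
Proof.
elim: t => [k|o a IH] /= eq_e; first exact: eq_e.
congr (op _ _ _ _ _); apply: functional_extensionality => i.
by apply: IH => j occ_j; apply: eq_e; exists i.
Qed.

Lemma occurs_bounded (t : term) : exists n, forall j, occurs j t -> j < n.
Proof.
elim: t => [k|o a IH] /=; first by exists k.+1 => j ->.
have [n nP] := fin_all_exists IH.
exists (\max_i n i) => j [i occ_j].
exact: leq_trans (nP i j occ_j) (leq_bigmax i).
Qed.

Lemma prolongSet_sub (Sigma Sigma' : identity O arity -> Prop) :
  (forall s, Sigma s -> Sigma' s) ->
  forall s, prolongSet O arity Sigma s -> prolongSet O arity Sigma' s.
Proof. by move=> sub s [sigma [/sub Sigma'_sigma prolong_s]]; exists sigma. Qed.

Lemma Id_of_Mod_sub (Sigma : identity O arity -> Prop) s :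
  Sigma s -> Id_of_Mod O arity Sigma s.
Proof. by move=> Ss B; apply. Qed.

Hypothesis arity_gt0 : forall o, 0 < arity o.

Lemma occurs_exists (t : term) : exists j, occurs j t.
Proof.
elim: t => [k|o a IH] /=; first by exists k.
have [j occ_j] := IH (Ordinal (arity_gt0 o)); by exists j, (Ordinal (arity_gt0 o)).
Qed.

Section TermSubalgebra.
Variables (A : algebra) (m : nat) (e : nat -> A).

Definition Tm_value (x : A) : Prop := exists t, T m t /\ eval A e t = x.

Definition Tm_elt := {x : A | Tm_value x}.

Lemma Tm_elt_inj (x y : Tm_elt) : proj1_sig x = proj1_sig y -> x = y.
Proof. by case: x y => [x px] [y py] /= eq_xy; apply: subset_eq_compat. Qed.

Definition Tm_name (x : Tm_elt) : term :=
  proj1_sig (constructive_indefinite_description _ (proj2_sig x)).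

Lemma Tm_nameP (x : Tm_elt) :
  T m (Tm_name x) /\ eval A e (Tm_name x) = proj1_sig x.
Proof.
exact: (proj2_sig (constructive_indefinite_description _ (proj2_sig x))).
Qed.

Lemma Tm_value_op o (args : 'I_(arity o) -> Tm_elt) :
  Tm_value (op O arity A o (fun i => proj1_sig (args i))).
Proof.
exists (App o (fun i => Tm_name (args i))); split.
- move=> j; split => /= [[i occ_j]|lt_jm]; first exact/(proj1 (Tm_nameP (args i)) j).
  by exists (Ordinal (arity_gt0 o)); apply/(proj1 (Tm_nameP _) j).
- congr (op _ _ _ _ _); apply: functional_extensionality => i.
  exact: (proj2 (Tm_nameP _)).
Qed.

Definition Tm_subalgebra : algebra :=
  Algebra O arity Tm_elt (fun o args => exist _ _ (Tm_value_op args)).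

Lemma eval_Tm_subalgebra (g : nat -> Tm_elt) (t : term) :
  proj1_sig (eval Tm_subalgebra g t) = eval A (fun j => proj1_sig (g j)) t.
Proof.
elim: t => [k|o a IH] //=; congr (op _ _ _ _ _).
by apply: functional_extensionality => i; apply: IH.
Qed.

Lemma Tm_subalgebra_models (Sigma : identity O arity -> Prop) :
  0 < m -> models O arity A (prolongSet O arity Sigma) ->
  models O arity Tm_subalgebra Sigma.
Proof.
move=> m_gt0 A_Sigma_p [u v] Sigma_uv g /=; apply: Tm_elt_inj.
have [n1 u_bnd] := occurs_bounded u; have [n2 v_bnd] := occurs_bounded v.
pose r j := Tm_name (g j).
have prolong_uv : prolongSet O arity Sigma (subst r u, subst r v).
  exists (u, v); split => //; exists m; split => //.
  exists (maxn n1 n2), r; split; [|split] => //= j.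
  - by case=> [/u_bnd|/v_bnd] /leq_trans; apply; rewrite ?leq_maxl ?leq_maxr.
  - by move=> _; apply: (proj1 (Tm_nameP (g j))).
have := A_Sigma_p _ prolong_uv e; rewrite /= !eval_subst !eval_Tm_subalgebra.
have -> // : (fun j => eval A e (r j)) = (fun j => proj1_sig (g j)).
by apply: functional_extensionality => j; apply: (proj2 (Tm_nameP (g j))).
Qed.

End TermSubalgebra.

Lemma prolong_m_satisfies (A : algebra) (sigma : identity O arity) m :
  (forall e, satisfies O arity (@Tm_subalgebra A m e) sigma) ->
  forall s, prolong_m O arity sigma m s -> satisfies O arity A s.
Proof.
case: sigma => u v sat_sigma s [n [r [bnd [r_T ->]]]] e /=.
have [j0 occ_j0] := occurs_exists u.
have n_gt0 : 0 < n by apply: leq_ltn_trans (bnd j0 (or_introl occ_j0)).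
(* g must be total: beyond y_1..y_n it is padded with the value of r 0 *)
pose r' j := if j < n then r j else r 0.
have r'_T j : T m (r' j) by rewrite /r'; case: ifP => [lt_jn|_]; apply: r_T.
pose g j : @Tm_elt A m e := exist _ _ (ex_intro _ (r' j) (conj (r'_T j) erefl)).
have eval_g t : (forall j, occurs j t -> j < n) ->
    eval A e (subst r t) = proj1_sig (eval (@Tm_subalgebra A m e) g t).
  move=> t_bnd; rewrite eval_subst eval_Tm_subalgebra.
  by apply: eq_eval => j /t_bnd lt_jn /=; rewrite /r' lt_jn.
rewrite !eval_g ?(sat_sigma e g) // => j occ_j; apply: bnd; by [left | right].
Qed.

End Prolongation.

Theorem corollary3p3 (O : Type) (arity : O -> nat) (Hplural : plural O arity)
  (Sigma : identity O arity -> Prop) :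
  forall A : algebra O arity,
    models O arity A (prolongSet O arity Sigma) <->
    models O arity A (prolongSet O arity (Id_of_Mod O arity Sigma)).
Proof.
have arity_gt0 := proj1 Hplural.
move=> A; split=> [A_Sigma_p s [sigma [Id_sigma [m [m_gt0 prolong_s]]]] | A_Id_p s].
- apply: (prolong_m_satisfies (arity_gt0 := arity_gt0)) prolong_s => e.
  exact/Id_sigma/Tm_subalgebra_models.
- by move/(prolongSet_sub (@Id_of_Mod_sub _ _ Sigma)); apply: A_Id_p.
Qed.
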